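(* Let $(E,X,Y)$, with $X=(X_1,\dots,X_d)$, be generated by a structural causal model whose graph is a DAG, whose distribution is faithful (and Markov) with respect to it, and in which $E$ is exogenous. Suppose $X=X_O\,\dot\cup\,X_H$, where only the variables $X_O$ are observed. Define $\mathcal{I}_O:=\{S\subseteq O\mid Y\perp\!\!\!\perp E\mid X_S\}$, call $S\subseteq O$ minimally invariant (among observed sets) if $S\in\mathcal{I}_O$ and no proper subset of $S$ lies in $\mathcal{I}_O$, and let $S_{\mathrm{IAS},O}$ be the union of all such sets (the empty set if there are none). Then $S_{\mathrm{IAS},O}\subseteq\mathrm{AN}_Y$.
   Context: $O\subseteq[d]$ indexes the observed predictors and $X_S=(X_j)_{j\in S}$. $\mathrm{AN}_Y$ denotes the set of ancestors of $Y$ in the DAG over all variables (observed and hidden), indices identified with variables. *)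

From mathcomp Require Import all_boot.
Set Implicit Arguments. Unset Strict Implicit. Unset Printing Implicit Defensive.

(* Variables of the model: None = E, Some None = Y, Some (Some j) = X_j. *)
Definition node (d : nat) : finType := option (option 'I_d).
Definition NE {d} : node d := None.
Definition NY {d} : node d := Some None.
Definition NX {d} (j : 'I_d) : node d := Some (Some j).

Section Graph.
Variable V : finType.
Variable g : rel V. (* g u v  <=>  directed edge u -> v *)

Definition acyclic : Prop := forall u v, g u v -> ~~ connect g v u.

Definition ancestor (u v : V) : bool := connect g u v.

Definition adj (u v : V) : bool := g u v || g v u.

Definition is_upath (a b : V) (s : seq V) : bool :=
  [&& s != [::], head a s == a, last a s == b, uniq s & path adj a (behead s)].

Definition blocked (Z : {set V}) (a : V) (s : seq V) : Prop :=
  exists i, 0 < i /\ i.+1 < size s /\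
    (let m := nth a s i in
     let l := nth a s i.-1 in
     let r := nth a s i.+1 in
     if g l m && g r m then ~~ [exists w in Z, connect g m w]
     else m \in Z).

Definition dsep (A B Z : {set V}) : Prop :=
  forall a b s, a \in A -> b \in B -> is_upath a b s -> blocked Z a s.

(* An independence model:  CI A B Z  means  X_A _||_ X_B | X_Z  *)
Definition indep_model := {set V} -> {set V} -> {set V} -> Prop.

Definition markov (CI : indep_model) : Prop :=
  forall A B Z : {set V}, [disjoint A & B] -> [disjoint A & Z] -> [disjoint B & Z] ->
    dsep A B Z -> CI A B Z.

Definition faithful (CI : indep_model) : Prop :=
  forall A B Z : {set V}, [disjoint A & B] -> [disjoint A & Z] -> [disjoint B & Z] ->
    CI A B Z -> dsep A B Z.
End Graph.

Definition exogenous d (g : rel (node d)) : Prop := forall v, ~~ g v NE.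

Definition Xset d (S : {set 'I_d}) : {set node d} := NX @: S.

Definition invariant d (CI : indep_model (node d)) (O S : {set 'I_d}) : Prop :=
  S \subset O /\ CI [set NY] [set NE] (Xset S).

Definition min_invariant d (CI : indep_model (node d)) (O S : {set 'I_d}) : Prop :=
  invariant CI O S /\ forall S' : {set 'I_d}, S' \proper S -> ~ invariant CI O S'.

Definition in_SIAS d (CI : indep_model (node d)) (O : {set 'I_d}) (j : 'I_d) : Prop :=
  exists S, min_invariant CI O S /\ j \in S.

From mathcomp Require Import all_boot zify.
From Stdlib Require Import Classical.

Set Implicit Arguments.
Unset Strict Implicit.
Unset Printing Implicit Defensive.

(* Let S be minimally invariant and T the members of S that are ancestors of
   Y.  By faithfulness X_S d-separates Y from E.  On a path from Y to E that
   is active given X_T, walking from an inner node along edges pointing away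
   from it ends at an active collider (an ancestor of X_T, hence of Y) or at
   Y, never at the parentless E; so every inner node is an ancestor of Y.  A
   node of X_S blocking the path is therefore in X_T, i.e. X_T d-separates Y
   from E as well, T is invariant by the Markov property, and T = S by
   minimality. *)

Definition reaches (V : finType) (g : rel V) (X : {set V}) (x : V) : bool :=
  [exists w in X, connect g x w].

Section Reaches.
Variables (V : finType) (g : rel V).

Lemma reaches_connect (X : {set V}) x y :
  connect g x y -> reaches g X y -> reaches g X x.
Proof.
move=> xy /existsP[w /andP[wX yw]].
by apply/existsP; exists w; rewrite wX (connect_trans xy yw).
Qed.

Lemma reachesS (X Y : {set V}) x : X \subset Y -> reaches g X x -> reaches g Y x.
Proof.
move=> /subsetP XY /existsP[w /andP[wX xw]].
by apply/existsP; exists w; rewrite XY.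
Qed.

Lemma reaches_setU1 (X : {set V}) x : reaches g (x |: X) x.
Proof. by apply/existsP; exists x; rewrite setU11 connect0. Qed.

Lemma reachesU1 (X : {set V}) x y :
  reaches g (y |: X) x = connect g x y || reaches g X x.
Proof.
apply/existsP/orP => [[w /andP[]]|[xy|/existsP[w /andP[wX xw]]]].
- rewrite in_setU1 => /orP[/eqP-> ->|wX xw]; first by left.
  by right; apply/existsP; exists w; rewrite wX.
- by exists y; rewrite setU11.
- by exists w; rewrite in_setU1 wX orbT.
Qed.

Lemma connect_parentless x b : (forall v, ~~ g v b) -> connect g x b -> x = b.
Proof.
move=> b_src /connectP[p xp]; case/lastP: p xp => [|p y] //.
rewrite last_rcons rcons_path => /andP[_ + eb].
by rewrite -eb (negbTE (b_src _)).
Qed.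

Lemma upath_adj (a b : V) (s : seq V) :
  is_upath g a b s ->
  [/\ head a s = a, last a s = b &
     forall i, i.+1 < size s -> adj g (nth a s i) (nth a s i.+1)].
Proof.
case/and5P; case: s => [|x p] // _ /eqP /= -> /eqP s_last _ s_path.
by split=> // i i_lt; move/pathP: s_path => /(_ a i i_lt).
Qed.

Lemma upath_inner_neq_end (a b : V) (s : seq V) i :
  is_upath g a b s -> i.+1 < size s -> nth a s i != b.
Proof.
case/and5P=> _ _ /eqP <- s_uniq _ i_lt.
have i_lt1 : i < size s := ltnW i_lt.
have s_gt0 : 0 < size s := leq_ltn_trans (leq0n i) i_lt1.
have i_lt_last : i < (size s).-1 by rewrite -subn1; lia.
by rewrite -nth_last nth_uniq ?ltn_eqF ?ltn_predL.
Qed.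

End Reaches.

Section ActivePath.
Variables (V : finType) (g : rel V) (Z : {set V}) (a : V) (s : seq V).
Hypothesis s_adj : forall i, i.+1 < size s -> adj g (nth a s i) (nth a s i.+1).
Hypothesis s_active : ~ blocked g Z a s.

Lemma active_collider i : 0 < i -> i.+1 < size s ->
  g (nth a s i.-1) (nth a s i) -> g (nth a s i.+1) (nth a s i) ->
  reaches g Z (nth a s i).
Proof.
move=> i_gt0 i_lt li ri; case rZ: (reaches g Z _) => //; case: s_active.
by exists i; do 2 split=> //=; rewrite li ri; apply: negbT.
Qed.

(* Follow the forward edges: the first backward edge closes an active collider. *)
Lemma active_walk_right k : k.+1 < size s -> g (nth a s k) (nth a s k.+1) ->
  reaches g (last a s |: Z) (nth a s k).
Proof.
have [n] := ubnP (size s - k); elim: n k => // n IH k lt_n k_lt edge.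
apply: reaches_connect (connect1 edge) _.
have [k2_lt | k2_ge] := ltnP k.+2 (size s).
- case back: (g (nth a s k.+2) (nth a s k.+1)).
    exact: reachesS (subsetUr _ _) (active_collider (ltn0Sn k) k2_lt edge back).
  have fwd : g (nth a s k.+1) (nth a s k.+2).
    by move: (s_adj k2_lt); rewrite /adj back orbF.
  by apply: IH fwd => //; lia.
- have -> : k.+1 = (size s).-1 by lia.
  by rewrite nth_last reaches_setU1.
Qed.

Lemma active_walk_left k : 0 < k < size s -> g (nth a s k) (nth a s k.-1) ->
  reaches g (head a s |: Z) (nth a s k).
Proof.
elim: k => // k IH /andP[_ k_lt] edge.
apply: reaches_connect (connect1 edge) _.
case: k IH k_lt edge => [|k] IH k_lt edge /=; first by rewrite nth0 reaches_setU1.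
case fwd: (g (nth a s k) (nth a s k.+1)).
  exact: reachesS (subsetUr _ _) (active_collider (ltn0Sn k) k_lt fwd edge).
apply: IH; first by apply/andP; split=> //; lia.
by move: (s_adj (ltnW k_lt)); rewrite /adj fwd.
Qed.

Lemma active_path_reaches i : 0 < i -> i.+1 < size s ->
  reaches g (head a s |: (last a s |: Z)) (nth a s i).
Proof.
move=> i_gt0 i_lt.
have [il | nil] := boolP (g (nth a s i) (nth a s i.-1)).
  apply: reachesS (setUS _ (subsetUr _ _)) (active_walk_left _ il).
  by rewrite i_gt0 ltnW.
have li : g (nth a s i.-1) (nth a s i).
  have := s_adj (i := i.-1); rewrite prednK // /adj (negbTE nil) orbF.
  by apply; lia.
have [ir | nir] := boolP (g (nth a s i) (nth a s i.+1)).
  exact: reachesS (subsetUr _ _) (active_walk_right i_lt ir).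
have ri : g (nth a s i.+1) (nth a s i).
  by move: (s_adj i_lt); rewrite /adj (negbTE nir).
apply: reachesS (active_collider i_gt0 i_lt li ri).
exact: subset_trans (subsetUr _ _) (subsetUr _ _).
Qed.

End ActivePath.

Lemma dsep_ancestral_subset (V : finType) (g : rel V) (a b : V) (Z : {set V}) :
  (forall v, ~~ g v b) -> dsep g [set a] [set b] Z ->
  dsep g [set a] [set b] [set w in Z | ancestor g w a].
Proof.
move=> b_src dsZ _ _ s /set1P-> /set1P-> us.
set Za := [set w in Z | _].
have [i [i_gt0 [i_lt blk]]] := dsZ a b s (set11 a) (set11 b) us.
apply: NNPP => active.
have [s_head s_last s_adj] := upath_adj us.
have m_anc : connect g (nth a s i) a.
  move: (active_path_reaches s_adj active i_gt0 i_lt).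
  rewrite s_head s_last !reachesU1 => /or3P[// | /(connect_parentless b_src) mb |].
    by move: (upath_inner_neq_end us i_lt); rewrite mb eqxx.
  by case/existsP=> w /andP[]; rewrite inE => /andP[_ wa] mw; apply: connect_trans mw wa.
move: blk => /=; case: ifP => [/andP[li ri] | ncoll mZ].
  apply/negP/negPn; apply: reachesS (active_collider active i_gt0 i_lt li ri).
  by apply/subsetP=> w; rewrite inE => /andP[].
by apply: active; exists i; do 2 split=> //=; rewrite ncoll inE mZ.
Qed.

Lemma invariant_dsep d (g : rel (node d)) (CI : indep_model (node d))
    (O S : {set 'I_d}) :
  markov g CI -> faithful g CI ->
  invariant CI O S <-> S \subset O /\ dsep g [set NY] [set NE] (Xset S).
Proof.
move=> mk fth.
have dYE : [disjoint [set NY : node d] & [set NE]] by rewrite disjoints1 inE.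
have dY : [disjoint [set NY : node d] & Xset S] by rewrite disjoints1; apply/imsetP=> -[].
have dE : [disjoint [set NE : node d] & Xset S] by rewrite disjoints1; apply/imsetP=> -[].
by split=> -[SO ci]; split=> //; [apply: fth | apply: mk].
Qed.

Lemma Xset_ancestors d (g : rel (node d)) (S : {set 'I_d}) :
  Xset [set k in S | ancestor g (NX k) NY] = [set w in Xset S | ancestor g w NY].
Proof.
apply/setP=> w; rewrite inE; apply/imsetP/andP => [[k]|[/imsetP[k kS ->] anc]].
  by rewrite inE => /andP[kS anc] ->; split=> //; apply: imset_f.
by exists k; rewrite // inE kS.
Qed.

Theorem proposition6 (d : nat) (g : rel (node d))
    (CI : indep_model (node d)) (O : {set 'I_d}) :
  acyclic g -> exogenous g -> markov g CI -> faithful g CI ->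
  forall j : 'I_d, in_SIAS CI O j -> ancestor g (NX j) NY.
Proof.
move=> _ exo mk fth j [S [[S_inv S_min] jS]].
have [SO dsS] := (invariant_dsep O S mk fth).1 S_inv.
pose T := [set k in S | ancestor g (NX k) NY].
have TS : T \subset S by apply/subsetP=> k; rewrite inE => /andP[].
have T_inv : invariant CI O T.
  apply/(invariant_dsep O T mk fth); split; first exact: subset_trans TS SO.
  by rewrite Xset_ancestors; apply: dsep_ancestral_subset.
have : ~~ (T \proper S) by apply/negP => /S_min/(_ T_inv).
rewrite properEneq TS andbT negbK => /eqP eTS.
by move: jS; rewrite -eTS /T inE => /andP[].
Qed.
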